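(* The only pairs of natural numbers $(x,y)$ (with $0 \in \mathbb{N}$) such that $3^x-2^y$ is a perfect square are $(0,0),(1,1),(2,3),(3,1),(4,5)$.
   Context: Here $\mathbb{N}=\{0,1,2,\dots\}$, and a perfect square means $n^2$ for some $n\in\mathbb{N}$. *)

From Stdlib Require Import ZArith Lia.
Open Scope Z_scope.
Definition perfect_square (z : Z) : Prop := exists n : nat, z = (Z.of_nat n) ^ 2.

(* If 3^x - 2^y = z^2 with x >= 1, reduction mod 3 forces y odd.  For y >= 3,
   reduction mod 8 forces x = 2k, so (3^k - z)(3^k + z) = 2^y; both factors are
   powers of 2 with sum 2 mod 4, hence 3^k - z = 2 and 3^k - 1 = 2^(y-2), which
   is solved by the same factorisation.  For y = 1 we work in Z[√-2], where
   3 = (1 + √-2)(1 - √-2): descent shows z + √-2 = ±(1 ± √-2)^x, so the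
   √-2-coordinate of (1 + √-2)^x is ±1, and Skolem's 2-adic congruence for
   (1 + √-2)^(4m) leaves only x = 1 and x = 3. *)

From Stdlib Require Import ZArith Lia Znumtheory.
Open Scope Z_scope.

Lemma Zpow_of_nat_succ (b : Z) (n : nat) : b ^ Z.of_nat (S n) = b * b ^ Z.of_nat n.
Proof. rewrite Nat2Z.inj_succ, Z.pow_succ_r; lia. Qed.

Lemma Zpow_of_nat_pos (b : Z) (n : nat) : 0 < b -> 0 < b ^ Z.of_nat n.
Proof. intros; apply Z.pow_pos_nonneg; lia. Qed.

Lemma Zpow_of_nat_inj (b : Z) (n m : nat) :
  1 < b -> b ^ Z.of_nat n = b ^ Z.of_nat m -> n = m.
Proof. intros Hb E; apply Z.pow_inj_r in E; lia. Qed.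

Lemma Zpow_of_nat_double (b : Z) (k : nat) :
  b ^ Z.of_nat (2 * k) = b ^ Z.of_nat k * b ^ Z.of_nat k.
Proof. rewrite <- Z.pow_add_r by lia; f_equal; lia. Qed.

Lemma pow3_odd (n : nat) : Z.Odd (3 ^ Z.of_nat n).
Proof.
  induction n as [|n [k Hk]]; [exists 0; reflexivity|].
  exists (3 * k + 1); rewrite Zpow_of_nat_succ, Hk; ring.
Qed.

Lemma prime_pow_factor (p a b : Z) (n : nat) :
  prime p -> 0 < a -> a * b = p ^ Z.of_nat n -> exists i : nat, a = p ^ Z.of_nat i.
Proof.
  intros Hp; pose proof (prime_ge_2 p Hp).
  revert a b; induction n as [|n IH]; intros a b Ha E.
  - exists 0%nat; exact (proj1 (Z.eq_mul_1_nonneg a b ltac:(lia) E)).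
  - rewrite Zpow_of_nat_succ in E.
    assert (Hpab : (p | a * b)) by (exists (p ^ Z.of_nat n); lia).
    destruct (prime_mult p Hp a b Hpab) as [[a' ->]|[b' ->]].
    + destruct (IH a' b) as [i Hi]; [nia | apply (Z.mul_reg_l _ _ p); lia |].
      exists (S i); rewrite Zpow_of_nat_succ; lia.
    + apply (IH a b'); [lia | apply (Z.mul_reg_l _ _ p); lia].
Qed.

Lemma odd_sq_sub_sq_pow2 (u v : Z) (n : nat) :
  Z.Odd u -> Z.Odd v -> 0 < v < u -> u * u - v * v = 2 ^ Z.of_nat n -> u - v = 2.
Proof.
  intros [a ->] [b ->] Hvu E.
  assert (Hf : (2 * a - 2 * b) * (2 * a + 2 * b + 2) = 2 ^ Z.of_nat n) by (rewrite <- E; ring).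
  destruct (prime_pow_factor 2 (2 * a - 2 * b) _ n prime_2 ltac:(lia) Hf) as [i Hi].
  rewrite Z.mul_comm in Hf.
  destruct (prime_pow_factor 2 (2 * a + 2 * b + 2) _ n prime_2 ltac:(lia) Hf) as [j Hj].
  destruct i as [|[|i]]; [change (2 ^ Z.of_nat 0) with 1 in Hi; lia
                        | change (2 ^ Z.of_nat 1) with 2 in Hi; lia |].
  destruct j as [|[|j]]; [change (2 ^ Z.of_nat 0) with 1 in Hj; lia
                        | change (2 ^ Z.of_nat 1) with 2 in Hj; lia |].
  rewrite !Zpow_of_nat_succ in Hi, Hj; lia.
Qed.

Lemma sq_mod3 (z : Z) : (z * z) mod 3 <> 2.
Proof.
  rewrite Z.mul_mod by lia.
  assert (z mod 3 = 0 \/ z mod 3 = 1 \/ z mod 3 = 2) as [-> | [-> | ->]]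
    by (Z.div_mod_to_equations; lia).
  all: Z.div_mod_to_equations; lia.
Qed.

Lemma odd_sq_mod8 (z : Z) : Z.Odd z -> (z * z) mod 8 = 1.
Proof.
  intros [k ->]; rewrite Z.mul_mod by lia.
  assert (Hr : (2 * k + 1) mod 8 = 1 \/ (2 * k + 1) mod 8 = 3 \/
               (2 * k + 1) mod 8 = 5 \/ (2 * k + 1) mod 8 = 7)
    by (Z.div_mod_to_equations; lia).
  destruct Hr as [-> | [-> | [-> | ->]]]; Z.div_mod_to_equations; lia.
Qed.

Lemma pow3_mod8 (n : nat) : 3 ^ Z.of_nat n mod 8 = if Nat.even n then 1 else 3.
Proof.
  induction n as [|n IH]; [reflexivity|].
  rewrite Zpow_of_nat_succ, <- Z.mul_mod_idemp_r, IH, Nat.even_succ, <- Nat.negb_even by lia.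
  now destruct (Nat.even n).
Qed.

Lemma pow2_mod3 (n : nat) : 2 ^ Z.of_nat n mod 3 = if Nat.even n then 1 else 2.
Proof.
  induction n as [|n IH]; [reflexivity|].
  rewrite Zpow_of_nat_succ, <- Z.mul_mod_idemp_r, IH, Nat.even_succ, <- Nat.negb_even by lia.
  now destruct (Nat.even n).
Qed.

Lemma pow2_mod8 (n : nat) : (3 <= n)%nat -> 2 ^ Z.of_nat n mod 8 = 0.
Proof.
  intros Hn; replace n with (3 + (n - 3))%nat by lia.
  rewrite Nat2Z.inj_add, Z.pow_add_r, Z.mul_comm by lia.
  change (2 ^ Z.of_nat 3) with 8; apply Z.mod_mul; lia.
Qed.

Lemma two_adic_decomposition (j : nat) :
  (0 < j)%nat -> exists v o, j = (2 ^ v * (2 * o + 1))%nat.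
Proof.
  induction j as [j IH] using lt_wf_ind; intros Hj.
  destruct (Nat.Even_or_Odd j) as [[h Eh] | [h Eh]].
  - destruct (IH h) as [v [o E]]; [lia | lia |].
    exists (S v), o; cbn [Nat.pow]; lia.
  - exists 0%nat, h; cbn [Nat.pow]; lia.
Qed.

Lemma abs_1_add_4_mul_odd (c e : Z) : 0 < c -> Z.Odd e -> Z.abs (1 + 4 * c * e) <> 1.
Proof.
  intros Hc [k ->] H.
  assert (Hce : c * (2 * k + 1) = 0 \/ 4 * (c * (2 * k + 1)) = -2) by lia.
  destruct Hce as [Hce | Hce]; [apply Z.mul_eq_0 in Hce |]; lia.
Qed.

Module Zsqrtm2.

(* The pair [(a, b)] stands for [a + b √-2]. *)

Definition mul (p q : Z * Z) : Z * Z :=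
  (fst p * fst q - 2 * snd p * snd q, fst p * snd q + snd p * fst q).

Definition opp (p : Z * Z) : Z * Z := (- fst p, - snd p).

Definition conj (p : Z * Z) : Z * Z := (fst p, - snd p).

Definition norm (p : Z * Z) : Z := fst p * fst p + 2 * snd p * snd p.

Fixpoint pow (p : Z * Z) (n : nat) : Z * Z :=
  match n with O => (1, 0) | S n => mul (pow p n) p end.

Definition w : Z * Z := (1, 1).

(* The units of Z[√-2] are ±1. *)
Definition assoc (p q : Z * Z) : Prop := p = q \/ p = opp q.

Definition cong (d : Z) (p q : Z * Z) : Prop :=
  (d | fst p - fst q) /\ (d | snd p - snd q).

Lemma mul_assoc p q r : mul (mul p q) r = mul p (mul q r).
Proof. destruct p, q, r; unfold mul; cbn [fst snd]; f_equal; ring. Qed.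

Lemma pow_add p n m : pow p (n + m) = mul (pow p n) (pow p m).
Proof.
  induction m as [|m IH].
  - rewrite Nat.add_0_r; cbn [pow]; destruct (pow p n) as [a b].
    unfold mul; cbn [fst snd]; f_equal; ring.
  - rewrite Nat.add_succ_r; cbn [pow]; rewrite IH, mul_assoc; reflexivity.
Qed.

Lemma norm_mul p q : norm (mul p q) = norm p * norm q.
Proof. unfold norm, mul; cbn [fst snd]; ring. Qed.

Lemma mul_opp_l p q : mul (opp p) q = opp (mul p q).
Proof. unfold mul, opp; cbn [fst snd]; f_equal; ring. Qed.

Lemma conj_opp p : conj (opp p) = opp (conj p).
Proof. reflexivity. Qed.

Lemma conjK p : conj (conj p) = p.
Proof. destruct p; unfold conj; cbn [fst snd]; rewrite Z.opp_involutive; reflexivity. Qed.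

Lemma assoc_conj p q : assoc (conj p) q -> assoc p (conj q).
Proof.
  intros [E | E]; [left | right]; rewrite <- (conjK p), E;
    [reflexivity | apply conj_opp].
Qed.

Lemma norm_eq_1 p : norm p = 1 -> assoc p (1, 0).
Proof.
  destruct p as [a b]; unfold norm; cbn [fst snd]; intros E.
  assert (b = 0) as -> by nia.
  assert (a = 1 \/ a = -1) as [-> | ->] by nia; [left | right]; reflexivity.
Qed.

Lemma three_dvd_norm p : (3 | norm p) -> (3 | fst p - snd p) \/ (3 | fst p + snd p).
Proof.
  intros [k Hk]; apply prime_mult; [exact prime_3|].
  exists (k - snd p * snd p); unfold norm in Hk; lia.
Qed.

Lemma w_divides p : (3 | fst p - snd p) -> exists q, p = mul q w.
Proof.
  destruct p as [a b]; intros [d Hd]; cbn [fst snd] in Hd.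
  exists (a - 2 * d, - d); unfold mul, w; cbn [fst snd]; f_equal; lia.
Qed.

(* [conj w * w = 3]. *)
Lemma three_dvd_conj_w_pow_mul_w k :
  (3 | fst (mul (conj (pow w (S k))) w)) /\ (3 | snd (mul (conj (pow w (S k))) w)).
Proof.
  cbn [pow]; destruct (pow w k) as [a b]; unfold mul, conj, w; cbn [fst snd].
  split; [exists a | exists (- b)]; ring.
Qed.

Section Descent.

Variable m : nat.

Hypothesis IH : forall q, norm q = 3 ^ Z.of_nat m -> ~ ((3 | fst q) /\ (3 | snd q)) ->
  assoc q (pow w m) \/ assoc q (conj (pow w m)).

Lemma assoc_w_pow_succ p : norm p = 3 ^ Z.of_nat (S m) -> ~ ((3 | fst p) /\ (3 | snd p)) ->
  (3 | fst p - snd p) -> assoc p (pow w (S m)).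
Proof.
  intros Hn Hp Hab.
  destruct (w_divides p Hab) as [q ->].
  assert (Hq : norm q = 3 ^ Z.of_nat m).
  { rewrite norm_mul, Zpow_of_nat_succ in Hn; change (norm w) with 3 in Hn; lia. }
  assert (Hq3 : ~ ((3 | fst q) /\ (3 | snd q))).
  { intros [[a Ha] [b Hb]]; apply Hp; destruct q as [a' b']; unfold mul, w; cbn [fst snd] in *.
    split; [exists (a - 2 * b) | exists (a + b)]; lia. }
  destruct (IH q Hq Hq3) as [Hw | Hc].
  - destruct Hw as [-> | ->]; [left | right]; [reflexivity | apply mul_opp_l].
  - destruct m as [|k].
    + destruct Hc as [-> | ->]; [left | right]; reflexivity.
    + exfalso; apply Hp; destruct (three_dvd_conj_w_pow_mul_w k) as [Ha Hb].
      destruct Hc as [-> | ->]; rewrite ?mul_opp_l; cbn [opp fst snd];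
        rewrite ?Z.divide_opp_r; split; assumption.
Qed.

End Descent.

Lemma norm_eq_pow3 n p : norm p = 3 ^ Z.of_nat n -> ~ ((3 | fst p) /\ (3 | snd p)) ->
  assoc p (pow w n) \/ assoc p (conj (pow w n)).
Proof.
  revert p; induction n as [|m IH]; intros p Hn Hp.
  - left; exact (norm_eq_1 p Hn).
  - assert (H3 : (3 | norm p)) by (rewrite Hn, Zpow_of_nat_succ; apply Z.divide_factor_l).
    destruct (three_dvd_norm p H3) as [Hsub | Hadd].
    + left; exact (assoc_w_pow_succ m IH p Hn Hp Hsub).
    + right; apply assoc_conj, (assoc_w_pow_succ m IH (conj p)).
      * rewrite <- Hn; unfold norm, conj; cbn [fst snd]; ring.
      * destruct p as [a b]; unfold conj; cbn [fst snd] in *.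
        rewrite Z.divide_opp_r; exact Hp.
      * destruct p as [a b]; unfold conj; cbn [fst snd] in *.
        rewrite Z.sub_opp_r; exact Hadd.
Qed.

Lemma norm_eq_pow3_abs_snd n p : norm p = 3 ^ Z.of_nat n -> ~ ((3 | fst p) /\ (3 | snd p)) ->
  Z.abs (snd p) = Z.abs (snd (pow w n)).
Proof.
  intros Hn Hp.
  destruct (norm_eq_pow3 n p Hn Hp) as [[-> | ->] | [-> | ->]];
    unfold opp, conj; cbn [fst snd]; rewrite ?Z.abs_opp; reflexivity.
Qed.

Lemma cong_refl d p : cong d p p.
Proof. split; rewrite Z.sub_diag; apply Z.divide_0_r. Qed.

Lemma cong_trans d p q r : cong d p q -> cong d q r -> cong d p r.
Proof.
  intros [H1 H2] [H3 H4]; split.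
  - replace (fst p - fst r) with ((fst p - fst q) + (fst q - fst r)) by ring.
    apply Z.divide_add_r; assumption.
  - replace (snd p - snd r) with ((snd p - snd q) + (snd q - snd r)) by ring.
    apply Z.divide_add_r; assumption.
Qed.

Lemma cong_mul d p p' q q' : cong d p p' -> cong d q q' -> cong d (mul p q) (mul p' q').
Proof.
  destruct p as [a b], p' as [a' b'], q as [c e], q' as [c' e']; unfold cong, mul.
  cbn [fst snd]; intros [[k1 E1] [k2 E2]] [[k3 E3] [k4 E4]].
  replace a with (a' + k1 * d) by lia; replace b with (b' + k2 * d) by lia.
  replace c with (c' + k3 * d) by lia; replace e with (e' + k4 * d) by lia.
  split.
  - exists (a' * k3 + k1 * c' + k1 * k3 * d - 2 * (b' * k4 + k2 * e' + k2 * k4 * d)); ring.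
  - exists (a' * k4 + k1 * e' + k1 * k4 * d + b' * k3 + k2 * c' + k2 * k3 * d); ring.
Qed.

(* Squaring doubles the modulus, as [(q + d k)^2 = q^2 + 2 d q k + d^2 k^2] and [2 d | d^2]. *)
Lemma cong_sqr d p q : (2 | d) -> cong d p q -> cong (2 * d) (mul p p) (mul q q).
Proof.
  destruct p as [a b], q as [a' b']; unfold cong, mul.
  cbn [fst snd]; intros [h ->] [[k1 E1] [k2 E2]].
  replace a with (a' + k1 * (h * 2)) by lia; replace b with (b' + k2 * (h * 2)) by lia.
  split.
  - exists (a' * k1 - 2 * b' * k2 + h * k1 * k1 - 2 * h * k2 * k2); ring.
  - exists (a' * k2 + k1 * b' + 2 * h * k1 * k2); ring.
Qed.

Lemma w_pow_cong_2 n : cong 2 (pow w n) (1, Z.of_nat n).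
Proof.
  induction n as [|n IH]; [apply cong_refl|].
  apply (cong_trans _ _ (mul (1, Z.of_nat n) w)); [apply cong_mul; [exact IH | apply cong_refl]|].
  unfold mul, w; split; [exists (- Z.of_nat n) | exists 0]; cbn [fst snd]; lia.
Qed.

Lemma w_pow_cong_2pow v :
  cong (8 * 2 ^ Z.of_nat v) (pow w (4 * 2 ^ v)) (1, 4 * 2 ^ Z.of_nat v).
Proof.
  induction v as [|v IH]; [split; exists (-1); reflexivity|].
  set (c := 2 ^ Z.of_nat v) in *.
  replace (4 * 2 ^ S v)%nat with (4 * 2 ^ v + 4 * 2 ^ v)%nat by (cbn [Nat.pow]; lia).
  rewrite pow_add, Zpow_of_nat_succ; fold c.
  replace (8 * (2 * c)) with (2 * (8 * c)) by ring.
  apply (cong_trans _ _ (mul (1, 4 * c) (1, 4 * c))).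
  - apply cong_sqr; [exists (4 * c); ring | exact IH].
  - unfold mul; split; [exists (- 2 * c) | exists 0]; cbn [fst snd]; ring.
Qed.

Lemma w_pow_cong_2pow_mul v o :
  cong (8 * 2 ^ Z.of_nat v) (pow w (4 * 2 ^ v * o)) (1, 4 * 2 ^ Z.of_nat v * Z.of_nat o).
Proof.
  set (c := 2 ^ Z.of_nat v).
  induction o as [|o IH].
  - rewrite Nat.mul_0_r, Z.mul_0_r; apply cong_refl.
  - rewrite Nat.mul_succ_r, pow_add.
    apply (cong_trans _ _ (mul (1, 4 * c * Z.of_nat o) (1, 4 * c))).
    + apply cong_mul; [exact IH | apply w_pow_cong_2pow].
    + unfold mul; rewrite Nat2Z.inj_succ.
      split; [exists (- 4 * c * Z.of_nat o) | exists 0]; cbn [fst snd]; ring.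
Qed.

Lemma snd_w_pow_odd_cong r v o : (r = 1 \/ r = 3)%nat ->
  exists e, Z.Odd e /\ snd (pow w (r + 4 * 2 ^ v * (2 * o + 1))) = 1 + 4 * 2 ^ Z.of_nat v * e.
Proof.
  intros Hr; set (c := 2 ^ Z.of_nat v).
  pose proof (cong_mul _ _ _ _ _ (cong_refl _ (pow w r)) (w_pow_cong_2pow_mul v (2 * o + 1)))
    as [_ [k Hk]].
  rewrite <- pow_add in Hk; fold c in Hk.
  destruct Hr as [-> | ->];
    [change (pow w 1) with (1, 1) in Hk | change (pow w 3) with (-5, 1) in Hk];
    unfold mul in Hk; cbn [fst snd] in Hk; rewrite Nat2Z.inj_add, Nat2Z.inj_mul in Hk.
  - exists (2 * Z.of_nat o + 1 + 2 * k); split; [exists (Z.of_nat o + k) |]; lia.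
  - exists (2 * k - 5 * (2 * Z.of_nat o + 1)); split; [exists (k - 5 * Z.of_nat o - 3) |]; lia.
Qed.

(* Skolem's 2-adic argument: [w ^ (4 m)] is congruent to [1 + 4 m √-2] modulo [8 ⋅ 2 ^ v(m)]. *)
Lemma abs_snd_w_pow_eq_1 n : Z.abs (snd (pow w n)) = 1 -> n = 1%nat \/ n = 3%nat.
Proof.
  intros H.
  assert (Hn : exists r j, (r = 1 \/ r = 3)%nat /\ n = (r + 4 * j)%nat).
  { destruct (w_pow_cong_2 n) as [_ [k Hk]]; cbn [snd] in Hk.
    destruct (Nat.Even_or_Odd n) as [[m ->] | [m ->]]; [exfalso; lia|].
    destruct (Nat.Even_or_Odd m) as [[j ->] | [j ->]]; [exists 1%nat, j | exists 3%nat, j]; lia. }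
  destruct Hn as [r [[|j] [Hr ->]]]; [lia|].
  destruct (two_adic_decomposition (S j)) as [v [o Ej]]; [lia|].
  destruct (snd_w_pow_odd_cong r v o Hr) as [e [He Hs]].
  rewrite Ej, Nat.mul_assoc, Hs in H.
  destruct (abs_1_add_4_mul_odd _ _ (Zpow_of_nat_pos 2 v ltac:(lia)) He H).
Qed.

End Zsqrtm2.

Lemma pow3_sub_1_eq_pow2 (k m : nat) :
  3 ^ Z.of_nat k - 1 = 2 ^ Z.of_nat m -> (k = 1 /\ m = 1)%nat \/ (k = 2 /\ m = 3)%nat.
Proof.
  intros E; pose proof (pow3_mod8 k) as H3; pose proof (Zpow_of_nat_pos 2 m ltac:(lia)).
  destruct (Nat.even k) eqn:Ek.
  - apply Nat.even_spec in Ek as [[|l] ->]; [cbn in E; lia|].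
    rewrite Zpow_of_nat_double in E.
    assert (HT : 3 ^ Z.of_nat (S l) - 1 = 2).
    { apply (odd_sq_sub_sq_pow2 _ _ m (pow3_odd (S l))); [exists 0; reflexivity | | lia].
      rewrite Zpow_of_nat_succ; pose proof (Zpow_of_nat_pos 3 l ltac:(lia)); lia. }
    assert (Hl : S l = 1%nat) by (apply (Zpow_of_nat_inj 3); [lia | cbn; lia]).
    rewrite Hl in E |- *; right; split; [reflexivity|].
    apply (Zpow_of_nat_inj 2); [lia | cbn in E |- *; lia].
  - destruct m as [|[|[|m]]].
    + change (2 ^ Z.of_nat 0) with 1 in E; Z.div_mod_to_equations; lia.
    + left; split; [|reflexivity].
      apply (Zpow_of_nat_inj 3); [lia | change (2 ^ Z.of_nat 1) with 2 in E; cbn; lia].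
    + change (2 ^ Z.of_nat 2) with 4 in E; Z.div_mod_to_equations; lia.
    + pose proof (pow2_mod8 (S (S (S m))) ltac:(lia)); Z.div_mod_to_equations; lia.
Qed.

Lemma pow3_sub_pow2_sq_exp_odd (x y : nat) (z : Z) : (1 <= x)%nat ->
  3 ^ Z.of_nat x - 2 ^ Z.of_nat y = z * z -> Nat.even y = false.
Proof.
  intros Hx E; destruct (Nat.even y) eqn:Ey; [exfalso | reflexivity].
  pose proof (pow2_mod3 y) as H2; rewrite Ey in H2.
  destruct x as [|x]; [lia|]; rewrite Zpow_of_nat_succ in E.
  apply (sq_mod3 z); rewrite <- E; Z.div_mod_to_equations; lia.
Qed.

Lemma sq_add_2_eq_pow3 (x : nat) (z : Z) : z * z + 2 = 3 ^ Z.of_nat x -> x = 1%nat \/ x = 3%nat.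
Proof.
  intros E; apply Zsqrtm2.abs_snd_w_pow_eq_1.
  rewrite <- (Zsqrtm2.norm_eq_pow3_abs_snd x (z, 1)); [reflexivity | |].
  - unfold Zsqrtm2.norm; cbn [fst snd]; lia.
  - intros [_ H1]; cbn [snd] in H1; apply Z.divide_pos_le in H1; lia.
Qed.

Lemma pow3_sub_pow2_sq_ge3 (x y : nat) (z : Z) : (3 <= y)%nat -> 0 <= z ->
  3 ^ Z.of_nat x - 2 ^ Z.of_nat y = z * z -> (x = 2 /\ y = 3)%nat \/ (x = 4 /\ y = 5)%nat.
Proof.
  intros Hy Hz E.
  pose proof (pow2_mod8 y Hy) as H2; pose proof (pow3_mod8 x) as H3.
  assert (Hzodd : Z.Odd z).
  { destruct (Z.Even_or_Odd z) as [[k ->] | Ho]; [exfalso | exact Ho].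
    destruct (Nat.even x); Z.div_mod_to_equations; lia. }
  pose proof (odd_sq_mod8 z Hzodd) as Hz8.
  destruct (Nat.even x) eqn:Ex; [| exfalso; Z.div_mod_to_equations; lia].
  apply Nat.even_spec in Ex as [k ->]; rewrite Zpow_of_nat_double in E.
  pose proof (Zpow_of_nat_pos 2 y ltac:(lia)); pose proof (Zpow_of_nat_pos 3 k ltac:(lia)).
  assert (HT : 3 ^ Z.of_nat k - z = 2).
  { apply (odd_sq_sub_sq_pow2 _ _ y (pow3_odd k) Hzodd); [| lia].
    destruct Hzodd as [m ->]; nia. }
  destruct y as [|[|y]]; [lia | lia |]; rewrite !Zpow_of_nat_succ in E.
  destruct (pow3_sub_1_eq_pow2 k y) as [[-> ->] | [-> ->]]; [nia | left | right]; lia.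
Qed.

Theorem mainTheorem1 : forall x y : nat,
  perfect_square (3 ^ Z.of_nat x - 2 ^ Z.of_nat y) <->
  ((x = 0 /\ y = 0) \/ (x = 1 /\ y = 1) \/ (x = 2 /\ y = 3) \/
   (x = 3 /\ y = 1) \/ (x = 4 /\ y = 5))%nat.
Proof.
  intros x y; split.
  - intros [n E]; rewrite Z.pow_2_r in E; pose proof (Nat2Z.is_nonneg n).
    destruct x as [|x].
    + destruct y as [|y]; [left; split; reflexivity | exfalso].
      change (3 ^ Z.of_nat 0) with 1 in E; rewrite Zpow_of_nat_succ in E.
      pose proof (Zpow_of_nat_pos 2 y ltac:(lia)); nia.
    + pose proof (pow3_sub_pow2_sq_exp_odd (S x) y _ ltac:(lia) E) as Hy.
      destruct y as [|[|[|y]]]; try discriminate Hy.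
      * change (2 ^ Z.of_nat 1) with 2 in E.
        destruct (sq_add_2_eq_pow3 (S x) (Z.of_nat n) ltac:(lia)) as [-> | ->]; lia.
      * destruct (pow3_sub_pow2_sq_ge3 (S x) (S (S (S y))) (Z.of_nat n) ltac:(lia) ltac:(lia) E)
          as [[-> ->] | [-> ->]]; lia.
  - intros [[-> ->] | [[-> ->] | [[-> ->] | [[-> ->] | [-> ->]]]]];
      [exists 0%nat | exists 1%nat | exists 1%nat | exists 5%nat | exists 7%nat]; reflexivity.
Qed.
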